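(* Let $G$ be a graph, $D\ge1$, and $e_1,\dots,e_r$ edges of $G$ with masses $m_{e_1},\dots,m_{e_r}$ all nonzero. If for some choice of constants $c_{e_1},\dots,c_{e_r}\in\mathbb C^D$ the intersection of quadrics $Q_{e_1}\cap\cdots\cap Q_{e_r}\subset H_1(G,\mathbb C^D)$ has a pinch point (a point of the intersection at which the differentials of the $r$ defining functions are linearly dependent), then the graph obtained from $G$ by cutting (deleting) the edges $e_1,\dots,e_r$ is disconnected.
   Context: Fix a nondegenerate symmetric bilinear form on $\mathbb C^D$ (the complexified Minkowski form), writing $v^2$ for the square of $v\in\mathbb C^D$. For an edge $e$, $e^\vee:H_1(G,\mathbb C^D)\to\mathbb C^D$ is the composite of the inclusion $H_1(G,\mathbb C^D)\subset(\mathbb C^D)^E$ with the $e$-th projection. For $c_e\in\mathbb C^D$ and a mass $m_e\in\mathbb C$, the propagator quadric is $Q_e=\{x\in H_1(G,\mathbb C^D)\mid (e^\vee(x)-c_e)^2-m_e^2=0\}$. *)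

From HB Require Import structures.
From mathcomp Require Import all_boot all_order all_algebra.
From mathcomp Require Import reals.
From mathcomp Require Import complex.
Set Implicit Arguments. Unset Strict Implicit. Unset Printing Implicit Defensive.
Import Order.TTheory GRing.Theory Num.Theory.
Local Open Scope ring_scope.

Section Defs.
Variable R : realType.
Local Notation C := R[i].

Definition bform (D : nat) (B : 'M[C]_D) (u v : 'rV[C]_D) : C :=
  (u *m B *m v^T) 0 0.

Definition nondeg_sym (D : nat) (B : 'M[C]_D) : Prop :=
  B^T = B /\ B \in unitmx.

(* A finite multigraph: vertices V, edges E, each edge oriented src -> tgt
   (loops and multiple edges allowed).  An element of (C^D)^E is a
   function x : E -> 'rV_D, and e^vee(x) = x e. *)

(* H_1(G, C^D) = kernel of the boundary map (C^D)^E -> (C^D)^V. *)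
Definition in_H1 (V E : finType) (src tgt : E -> V) (D : nat)
    (x : E -> 'rV[C]_D) : Prop :=
  forall w : V, \sum_(e | tgt e == w) x e - \sum_(e | src e == w) x e = 0.

Definition quad_fun (D : nat) (B : 'M[C]_D) (E : finType) (e : E)
    (c : 'rV[C]_D) (m : C) (x : E -> 'rV[C]_D) : C :=
  bform B (x e - c) (x e - c) - m ^+ 2.

Definition dquad_fun (D : nat) (B : 'M[C]_D) (E : finType) (e : E)
    (c : 'rV[C]_D) (x v : E -> 'rV[C]_D) : C :=
  bform B (x e - c) (v e) + bform B (v e) (x e - c).

Definition pinch_point (V E : finType) (src tgt : E -> V) (D r : nat)
    (B : 'M[C]_D) (edges : 'I_r -> E) (c : 'I_r -> 'rV[C]_D) (m : 'I_r -> C)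
    (x : E -> 'rV[C]_D) : Prop :=
  [/\ in_H1 src tgt x,
      forall i, quad_fun B (edges i) (c i) (m i) x = 0 &
      exists lambda : 'I_r -> C, (exists i, lambda i != 0) /\
        forall v, in_H1 src tgt v ->
          \sum_(i < r) lambda i * dquad_fun B (edges i) (c i) x v = 0].

End Defs.

Definition cut_adj (V E : finType) (src tgt : E -> V) (S : {set E}) : rel V :=
  fun u w => [exists e, (e \notin S) &&
    (((src e == u) && (tgt e == w)) || ((src e == w) && (tgt e == u)))].

Definition cut_connected (V E : finType) (src tgt : E -> V) (S : {set E})
    : Prop :=
  forall u w : V, connect (cut_adj src tgt S) u w.

(* If G minus the cut edges is connected, then for each cut edge e_i there is
   a cycle of G which runs through e_i with value y = x(e_i) - c_i and avoids
   every other cut edge: close up a path from tgt e_i to src e_i in the cut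
   graph.  Pairing the dependency sum_j lambda_j dQ_j(x) with this cycle
   leaves lambda_i (2 y.y) = 2 lambda_i m_i^2, which vanishes only if
   lambda_i = 0, as m_i != 0. *)
From HB Require Import structures.
From mathcomp Require Import all_boot all_order all_algebra.
From mathcomp Require Import reals.
From mathcomp Require Import complex.
Set Implicit Arguments. Unset Strict Implicit. Unset Printing Implicit Defensive.
Import Order.TTheory GRing.Theory Num.Theory.
Local Open Scope ring_scope.

Section Boundary.
Variables (K : zmodType) (V E : finType) (src tgt : E -> V).

Definition boundary (x : E -> K) (w : V) : K :=
  \sum_(e | tgt e == w) x e - \sum_(e | src e == w) x e.

Definition point_charge (a : V) (y : K) (w : V) : K := if a == w then y else 0.

Definition edge_flow (e : E) (y : K) (e' : E) : K := if e' == e then y else 0.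

Lemma point_chargeN a y w : point_charge a (- y) w = - point_charge a y w.
Proof. by rewrite /point_charge; case: eqP; rewrite ?oppr0. Qed.

Lemma boundaryD (x z : E -> K) w :
  boundary (fun e => x e + z e) w = boundary x w + boundary z w.
Proof. by rewrite /boundary !big_split /= opprD addrACA. Qed.

Lemma sum_edge_flow (P : pred E) e y :
  \sum_(e' | P e') edge_flow e y e' = if P e then y else 0.
Proof.
rewrite -big_mkcondr /=; case: ifP => Pe.
  by rewrite (big_pred1 e) // => e' /=; case: eqP => [->|]; rewrite ?Pe ?andbF.
by rewrite big_pred0 // => e'; case: eqP => [->|]; rewrite ?Pe ?andbF.
Qed.

Lemma boundary_edge_flow e y w :
  boundary (edge_flow e y) w = point_charge (tgt e) y w - point_charge (src e) y w.
Proof. by rewrite /boundary !sum_edge_flow. Qed.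

Lemma path_flow (S : {set E}) a b (y : K) :
  connect (cut_adj src tgt S) a b ->
  exists x : E -> K, (forall e, e \in S -> x e = 0) /\
    forall w, boundary x w = point_charge b y w - point_charge a y w.
Proof.
move=> /connectP [p path_p ->]; elim: p a path_p => [|a' p IHp] a /=.
  by move=> _; exists (fun _ => 0); split=> // w; rewrite /boundary !big1 // !subrr.
case/andP=> /existsP [e /andP [eNS adj_e]] /IHp [x [xS bx]].
have flow_offS z e' : e' \in S -> x e' + edge_flow e z e' = 0.
  move=> e'S; rewrite xS // /edge_flow; case: eqP => [e'e|]; last by rewrite addr0.
  by move: eNS; rewrite -e'e e'S.
case/orP: adj_e => /andP [/eqP src_e /eqP tgt_e].
  exists (fun e' => x e' + edge_flow e y e'); split; first exact: flow_offS.
  by move=> w; rewrite boundaryD bx boundary_edge_flow src_e tgt_e addrA subrK.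
exists (fun e' => x e' + edge_flow e (- y) e'); split; first exact: flow_offS.
move=> w; rewrite boundaryD bx boundary_edge_flow src_e tgt_e !point_chargeN.
by rewrite opprK addrACA addNr addr0.
Qed.

Lemma cycle_through_edge (S : {set E}) e (y : K) : e \in S ->
  connect (cut_adj src tgt S) (tgt e) (src e) ->
  exists v : E -> K, [/\ forall w, boundary v w = 0, v e = y &
    forall e', e' \in S -> e' != e -> v e' = 0].
Proof.
move=> eS /(path_flow y) [x [xS bx]]; exists (fun e' => x e' + edge_flow e y e').
split=> [w||e' e'S e'Ne].
- by rewrite boundaryD bx boundary_edge_flow addrC addrA subrK subrr.
- by rewrite xS // /edge_flow eqxx add0r.
- by rewrite xS // /edge_flow (negbTE e'Ne) addr0.
Qed.
End Boundary.

Section Quadrics.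
Variables (R : realType) (D : nat) (B : 'M[R[i]]_D) (E : finType).

Lemma dquad_fun_eq0 e c (x v : E -> 'rV[R[i]]_D) :
  v e = 0 -> dquad_fun B e c x v = 0.
Proof.
by move=> ve0; rewrite /dquad_fun /bform ve0 trmx0 mulmx0 !mul0mx mxE addr0.
Qed.

Lemma dquad_fun_radial e c m (x v : E -> 'rV[R[i]]_D) :
  quad_fun B e c m x = 0 -> v e = x e - c -> dquad_fun B e c x v = m ^+ 2 *+ 2.
Proof.
by move=> /eqP; rewrite subr_eq0 => /eqP Qx ve; rewrite /dquad_fun ve Qx.
Qed.

End Quadrics.

Theorem proposition10p1 (R : realType) (V E : finType) (src tgt : E -> V)
    (D r : nat) (B : 'M[R[i]]_D) (edges : 'I_r -> E)
    (m : 'I_r -> R[i]) (c : 'I_r -> 'rV[R[i]]_D) :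
  (1 <= D)%N -> nondeg_sym B -> injective edges ->
  (forall i, m i != 0) ->
  (exists x : E -> 'rV[R[i]]_D, pinch_point src tgt B edges c m x) ->
  ~ cut_connected src tgt [set edges i | i : 'I_r].
Proof.
move=> _ _ edges_inj m_neq0 [x [xH1 xQ [lambda [[i lambda_i] dependent]]]] conn.
have ei_cut : edges i \in [set edges j | j : 'I_r] by exact: imset_f.
have [v [vH1 v_ei v_cut]] := cycle_through_edge (x (edges i) - c i) ei_cut
  (conn (tgt (edges i)) (src (edges i))).
have := dependent v vH1; rewrite (bigD1 i) //= big1 ?addr0; last first.
  move=> j ji; rewrite dquad_fun_eq0 ?mulr0 // v_cut ?imset_f //.
  by rewrite (inj_eq edges_inj).
rewrite (dquad_fun_radial (xQ i) v_ei) => /eqP.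
by rewrite mulf_eq0 mulrn_eq0 expf_eq0 (negbTE lambda_i) (negbTE (m_neq0 i)).
Qed.
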